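(* Consider the Com-IC model with GAPs in $\mathbf{Q}^+$ and fixed seed sets $S_\mathcal{A},S_\mathcal{B}$. Fix the live/blocked status of every edge, the thresholds $\alpha^v_\mathcal{A},\alpha^v_\mathcal{B}$ and the coins $\tau_v$ of every node. Then the final sets of $\mathcal{A}$-adopted and $\mathcal{B}$-adopted nodes are the same for every choice of the tie-breaking permutations $\pi_v$, $v\in V$; hence the tie-breaking rule does not affect the outcome in the mutual complementarity case.
   Context: Com-IC model. Let $G=(V,E,p)$ be a directed graph with $p:E\to[0,1]$ and $N^-(v)$ the in-neighbours of $v$. Two items $\mathcal{A},\mathcal{B}$; GAPs $\mathbf{Q}=(q_{\mathcal{A}|\emptyset},q_{\mathcal{A}|\mathcal{B}},q_{\mathcal{B}|\emptyset},q_{\mathcal{B}|\mathcal{A}})\in[0,1]^4$. Given seed sets $S_\mathcal{A},S_\mathcal{B}\subseteq V$, randomness: each edge $(u,v)$ independently live w.p. $p(u,v)$; each node $v$ independently draws $\alpha^v_\mathcal{A},\alpha^v_\mathcal{B}$ uniform on $[0,1]$, a uniformly random permutation $\pi_v$ of $N^-(v)$, and a fair coin $\tau_v\in\{\mathcal{A},\mathcal{B}\}$. For each item $X$ each node is $X$-idle, $X$-suspended, $X$-adopted or $X$-rejected; initially all idle. At step $0$ nodes of $S_\mathcal{A}$ become $\mathcal{A}$-adopted and nodes of $S_\mathcal{B}$ become $\mathcal{B}$-adopted (order for nodes in both given by $\tau_v$). At step $t\ge1$, $v$ is informed of $X$ by in-neighbour $u$ if $(u,v)$ is live and $u$ adopted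 $X$ at step $t-1$; informing in-neighbours are processed in order $\pi_v$ (an in-neighbour that adopted both items is processed for both, in its adoption order). When $v$ is informed of $X$ ($Y$ the other item) while $X$-idle: if $Y$-adopted, $v$ becomes $X$-adopted if $\alpha^v_X\le q_{X|Y}$, else $X$-rejected; otherwise $X$-adopted if $\alpha^v_X\le q_{X|\emptyset}$, else $X$-suspended. Informing a non-$X$-idle node of $X$ has no effect. Reconsideration: when an $X$-suspended node becomes $Y$-adopted, it becomes $X$-adopted if $\alpha^v_X\le q_{X|Y}$, else $X$-rejected. The process stops when nothing changes. $\mathbf{Q}^+$: $q_{\mathcal{A}|\emptyset}\le q_{\mathcal{A}|\mathcal{B}}$ and $q_{\mathcal{B}|\emptyset}\le q_{\mathcal{B}|\mathcal{A}}$. *)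

From HB Require Import structures.
From mathcomp Require Import all_boot all_order all_algebra.
Set Implicit Arguments. Unset Strict Implicit. Unset Printing Implicit Defensive.
Import Order.TTheory GRing.Theory Num.Theory.
Local Open Scope ring_scope.

Inductive item := IA | IB.

Definition other (X : item) : item := match X with IA => IB | IB => IA end.

Definition item_eqb (X Y : item) : bool :=
  match X, Y with IA, IA | IB, IB => true | _, _ => false end.

Inductive status := Idle | Suspended | Adopted | Rejected.

Definition is_adopted (s : status) : bool :=
  match s with Adopted => true | _ => false end.

Record gaps (R : realFieldType) := Gaps {
  qA0 : R; qAB : R; qB0 : R; qBA : R }.

Definition qcond (R : realFieldType) (Q : gaps R) (X : item) (givenOther : bool) : R :=
  match X, givenOther with
  | IA, false => qA0 Q | IA, true => qAB Q
  | IB, false => qB0 Q | IB, true => qBA Q end.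

Definition gaps_valid (R : realFieldType) (Q : gaps R) : Prop :=
  [/\ 0 <= qA0 Q <= 1, 0 <= qAB Q <= 1, 0 <= qB0 Q <= 1 & 0 <= qBA Q <= 1].

Definition Qplus (R : realFieldType) (Q : gaps R) : Prop :=
  qA0 Q <= qAB Q /\ qB0 Q <= qBA Q.

Definition set_status (f : item -> status) (X : item) (s : status) : item -> status :=
  fun Y => if item_eqb Y X then s else f Y.

(* Local state of a node during a step: its statuses and the list (in order)
   of items it has adopted during the current step. *)
Definition lstate := ((item -> status) * seq item)%type.

Definition inform (R : realFieldType) (Q : gaps R) (alpha_v : item -> R)
    (ls : lstate) (X : item) : lstate :=
  let (f, nw) := ls in
  let Y := other X in
  match f X with
  | Idle =>
    match f Y with
    | Adopted =>
        if alpha_v X <= qcond Q X true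
        then (set_status f X Adopted, nw ++ [:: X])
        else (set_status f X Rejected, nw)
    | _ =>
        if alpha_v X <= qcond Q X false then
          let f1 := set_status f X Adopted in
          match f Y with
          | Suspended =>  (* reconsideration of Y *)
              if alpha_v Y <= qcond Q Y true
              then (set_status f1 Y Adopted, nw ++ [:: X; Y])
              else (set_status f1 Y Rejected, nw ++ [:: X])
          | _ => (f1, nw ++ [:: X])
          end
        else (set_status f X Suspended, nw)
    end
  | _ => ls
  end.

(* Global state: statuses, and for every node the ordered list of items it
   adopted at the last step. *)
Record cstate (V : finType) := CState {
  st : V -> item -> status;
  newad : V -> seq item }.

Definition seed (V : finType) (SA SB : {set V}) (X : item) : {set V} :=
  match X with IA => SA | IB => SB end.

(* Step 0: seeding; for nodes in both seed sets the order is given by tau. *)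
Definition init (V : finType) (SA SB : {set V}) (tau : V -> item) : cstate V :=
  CState (fun v X => if v \in seed SA SB X then Adopted else Idle)
         (fun v => [seq X <- [:: tau v; other (tau v)] | v \in seed SA SB X]).

(* Step t >= 1: every node v processes, in the order pi v of its in-neighbours,
   the informing events from live in-edges whose tail adopted items at t-1
   (both items, in the tail's adoption order). *)
Definition step (R : realFieldType) (V : finType) (live : rel V) (pi : V -> seq V)
    (Q : gaps R) (alpha : V -> item -> R) (s : cstate V) : cstate V :=
  let res v := foldl (inform Q (alpha v)) (st s v, [::])
                 (flatten [seq if live u v then newad s u else [::] | u <- pi v]) in
  CState (fun v => (res v).1) (fun v => (res v).2).

Definition run (R : realFieldType) (V : finType) (live : rel V) (pi : V -> seq V)
    (Q : gaps R) (alpha : V -> item -> R) (SA SB : {set V}) (tau : V -> item)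
    (n : nat) : cstate V :=
  iter n (step live pi Q alpha) (init SA SB tau).

Definition stopped (R : realFieldType) (V : finType) (live : rel V) (pi : V -> seq V)
    (Q : gaps R) (alpha : V -> item -> R) (s : cstate V) : Prop :=
  forall v, (forall X, st (step live pi Q alpha s) v X = st s v X) /\
            newad (step live pi Q alpha s) v = newad s v.

Definition adopted_set (V : finType) (s : cstate V) (X : item) : {set V} :=
  [set v | is_adopted (st s v X)].

Definition tiebreak_ok (V : finType) (E : rel V) (pi : V -> seq V) : Prop :=
  forall v, perm_eq (pi v) (enum [pred u | E u v]).

From HB Require Import structures.
From mathcomp Require Import all_boot all_order all_algebra.
Set Implicit Arguments. Unset Strict Implicit. Unset Printing Implicit Defensive.
Import Order.TTheory GRing.Theory Num.Theory.
Local Open Scope ring_scope.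

(* Both outcomes equal the least family P (read P X v as "v adopts X") closed
   under two rules: the seeds of X adopt X, and a node informed of X through a
   live edge by a member of P X adopts X when alpha^v_X <= q_{X|0}, or when
   alpha^v_X <= q_{X|Y} and it adopts Y.  The tie-breaking order does not enter
   this description.  Every run stays inside every closed family, since each
   adoption performed by [inform] is justified by one of the rules.  Conversely
   the state of a stopped run is closed: a node informed of X is no longer
   X-idle, an X-rejected node has alpha^v_X > q_{X|Y} >= q_{X|0} (this is where
   Q^+ is needed), and an X-suspended one has alpha^v_X > q_{X|0} and has not
   adopted Y. *)

Lemma item_eqbP : Equality.axiom item_eqb.
Proof. by do 2 case; constructor. Qed.

HB.instance Definition _ := hasDecEq.Build item item_eqbP.

Lemma qcond_mono (R : realFieldType) (Q : gaps R) X :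
  Qplus Q -> qcond Q X false <= qcond Q X true.
Proof. by case: X => -[]. Qed.

Ltac inform_cases :=
  rewrite /inform /set_status /=;
  repeat match goal with
  | |- context[match ?f ?Z with _ => _ end] => let E := fresh "E" in case E: (f Z) => //=
  | |- context[if ?c then _ else _] => let E := fresh "E" in case E: c => //=
  end;
  repeat match goal with H : ?t = ?c |- context[?t] => rewrite H end.

Section Inform.
Variables (R : realFieldType) (Q : gaps R) (a : item -> R).

Lemma inform_adopted (ls : lstate) X Z :
  is_adopted (ls.1 Z) -> is_adopted ((inform Q a ls X).1 Z).
Proof. by case: ls => f nw /=; case: X; case: Z; inform_cases. Qed.

Lemma inform_nonidle (ls : lstate) X Z :
  ls.1 Z <> Idle -> (inform Q a ls X).1 Z <> Idle.
Proof. case: ls => f nw /=; case: X; case: Z; inform_cases; congruence. Qed.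

Lemma inform_informed (ls : lstate) X : (inform Q a ls X).1 X <> Idle.
Proof. case: ls => f nw /=; case: X; inform_cases; congruence. Qed.

Lemma mem_inform_new (ls : lstate) X Z :
  (Z \in (inform Q a ls X).2) =
  (Z \in ls.2) || ~~ is_adopted (ls.1 Z) && is_adopted ((inform Q a ls X).1 Z).
Proof.
case: ls => f nw /=; case: X; case: Z; inform_cases;
  by rewrite ?mem_cat ?inE /= ?eqxx ?andNb ?orbT ?orbF.
Qed.

Definition status_consistent (f : item -> status) : Prop := forall Z,
  (f Z = Rejected -> qcond Q Z true < a Z) /\
  (f Z = Suspended -> qcond Q Z false < a Z /\ ~~ is_adopted (f (other Z))).

Lemma inform_consistent (ls : lstate) X :
  status_consistent ls.1 -> status_consistent (inform Q a ls X).1.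
Proof.
case: ls => f nw /= H Z; move: (H IA) (H IB) => /=; rewrite !ltNge.
by case: X; case: Z; inform_cases; intuition.
Qed.

Definition status_justified (adoptable reached : item -> Prop) (f : item -> status) :=
  forall Z, (is_adopted (f Z) -> adoptable Z) /\ (f Z <> Idle -> reached Z).

Lemma inform_justified (adoptable reached : item -> Prop) (ls : lstate) X :
  (forall Z, reached Z ->
     a Z <= qcond Q Z false \/ a Z <= qcond Q Z true /\ adoptable (other Z) ->
     adoptable Z) ->
  reached X -> status_justified adoptable reached ls.1 ->
  status_justified adoptable reached (inform Q a ls X).1.
Proof.
case: ls => f nw /= rule HX H Z.
move: (rule IA) (rule IB) (H IA) (H IB) => /=.
by case: X HX; case: Z; inform_cases; intuition (try discriminate).
Qed.

Local Notation fold := (foldl (inform Q a)).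

Lemma fold_inform_ind (I : lstate -> Prop) (l : seq item) (ls : lstate) :
  (forall ls X, X \in l -> I ls -> I (inform Q a ls X)) -> I ls -> I (fold ls l).
Proof.
elim: l ls => //= X l IH ls stepI Ils; apply: IH => [ls' Y lY|]; apply: stepI => //.
- by rewrite inE lY orbT.
- by rewrite inE eqxx.
Qed.

Lemma fold_informed (l : seq item) (ls : lstate) X : X \in l -> (fold ls l).1 X <> Idle.
Proof.
case/splitPr => l1 l2; rewrite foldl_cat /=.
apply: (fold_inform_ind (I := fun ls => ls.1 X <> Idle)); last exact: inform_informed.
by move=> ls' Y _; apply: inform_nonidle.
Qed.

Lemma mem_fold_new (l : seq item) (ls : lstate) Z :
  (Z \in (fold ls l).2) =
  (Z \in ls.2) || ~~ is_adopted (ls.1 Z) && is_adopted ((fold ls l).1 Z).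
Proof.
elim: l ls => //= [|X l IH] ls; first by case: (is_adopted _); rewrite ?orbF.
have a01 := @inform_adopted ls X Z.
have a12 : is_adopted ((inform Q a ls X).1 Z) ->
            is_adopted ((fold (inform Q a ls X) l).1 Z).
  by apply: (fold_inform_ind (I := fun ls' => is_adopted (ls'.1 Z))) => ls' Y _;
     apply: inform_adopted.
rewrite IH mem_inform_new -orbA; congr (_ || _).
by move/implyP: a01; move/implyP: a12; do 3 case: (is_adopted _).
Qed.
End Inform.

Section Step.
Variables (R : realFieldType) (V : finType) (live : rel V) (pi : V -> seq V)
  (Q : gaps R) (alpha : V -> item -> R).
Local Notation step := (step live pi Q alpha).

Definition informed_of (c : cstate V) (v : V) : seq item :=
  flatten [seq if live u v then newad c u else [::] | u <- pi v].

Lemma st_step c v :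
  st (step c) v = (foldl (inform Q (alpha v)) (st c v, [::]) (informed_of c v)).1.
Proof. by []. Qed.

Lemma newad_step c v :
  newad (step c) v = (foldl (inform Q (alpha v)) (st c v, [::]) (informed_of c v)).2.
Proof. by []. Qed.

Lemma step_adopted c v Z : is_adopted (st c v Z) -> is_adopted (st (step c) v Z).
Proof.
move=> adZ; rewrite st_step.
apply: (fold_inform_ind (I := fun ls => is_adopted (ls.1 Z))) => // ls X _.
exact: inform_adopted.
Qed.

Lemma step_nonidle c v Z : st c v Z <> Idle -> st (step c) v Z <> Idle.
Proof.
move=> touchedZ; rewrite st_step.
apply: (fold_inform_ind (I := fun ls => ls.1 Z <> Idle)) => // ls X _.
exact: inform_nonidle.
Qed.

Lemma step_consistent c v :
  status_consistent Q (alpha v) (st c v) -> status_consistent Q (alpha v) (st (step c) v).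
Proof.
move=> consistent_v; rewrite st_step.
apply: (fold_inform_ind (I := fun ls => status_consistent Q _ ls.1)) => // ls X _.
exact: inform_consistent.
Qed.

Lemma mem_newad_step c v Z :
  (Z \in newad (step c) v) = ~~ is_adopted (st c v Z) && is_adopted (st (step c) v Z).
Proof. by rewrite newad_step mem_fold_new. Qed.

Lemma step_informed c u v X :
  u \in pi v -> live u v -> X \in newad c u -> st (step c) v X <> Idle.
Proof.
move=> piu luv uX; rewrite st_step; apply: fold_informed.
by apply/flatten_mapP; exists u; rewrite ?luv.
Qed.
End Step.

Section Run.
Variables (R : realFieldType) (V : finType) (live : rel V) (pi : V -> seq V)
  (Q : gaps R) (alpha : V -> item -> R) (SA SB : {set V}) (tau : V -> item).
Local Notation step := (step live pi Q alpha).
Local Notation run := (run live pi Q alpha SA SB tau).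

Lemma runS t : run t.+1 = step (run t).
Proof. exact: iterS. Qed.

Lemma run_preserved (P : cstate V -> Prop) t t' :
  (forall c, P c -> P (step c)) -> (t <= t')%N -> P (run t) -> P (run t').
Proof.
move=> stepP /subnK <-; elim: (t' - t)%N => // k IH Pt.
by rewrite addSn runS; apply/stepP/IH.
Qed.

Lemma newad_run_adopted t v Z : Z \in newad (run t) v -> is_adopted (st (run t) v Z).
Proof.
case: t => [|t]; first by rewrite mem_filter /= => /andP[->].
by rewrite runS mem_newad_step => /andP[].
Qed.

Lemma adopted_run_newad t v Z :
  is_adopted (st (run t) v Z) -> exists2 t', (t' <= t)%N & Z \in newad (run t') v.
Proof.
elim: t => [|t IH].
  rewrite /=; case: ifP => // seedZ _; exists 0%N => //.
  by rewrite mem_filter seedZ; case: Z seedZ; case: (tau v).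
case adZ: (is_adopted (st (run t) v Z)) => adZ'.
  by have [t' le_t't tZ] := IH adZ; exists t' => //; apply: leqW.
by exists t.+1 => //; rewrite runS mem_newad_step -runS adZ.
Qed.

Lemma run_consistent t v : status_consistent Q (alpha v) (st (run t) v).
Proof.
apply: (run_preserved (P := fun c => status_consistent Q (alpha v) (st c v)) (t := 0%N)).
- by move=> c; apply: step_consistent.
- by [].
- by move=> Z /=; case: ifP.
Qed.

Lemma stopped_newad_nil t v : stopped live pi Q alpha (run t) -> newad (run t) v = [::].
Proof.
move=> /(_ v) [_ fixed]; case E: (newad (run t) v) => [//|Z l].
have tZ : Z \in newad (run t) v by rewrite E inE eqxx.
move: (newad_run_adopted tZ); rewrite -fixed mem_newad_step in tZ.
by case/andP: tZ => /negP.
Qed.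

Definition adoption_closed (P : item -> V -> Prop) : Prop :=
  (forall X v, v \in seed SA SB X -> P X v) /\
  (forall X u v, live u v -> P X u ->
     alpha v X <= qcond Q X false \/ alpha v X <= qcond Q X true /\ P (other X) v ->
     P X v).

Lemma run_adopted_closed P t v X :
  adoption_closed P -> is_adopted (st (run t) v X) -> P X v.
Proof.
case=> seedP ruleP.
pose informed_by_P w Z := w \in seed SA SB Z \/ exists2 u, live u w & P Z u.
suff inv w : status_justified (P^~ w) (informed_by_P w) (st (run t) w).
  by move/(inv v X).1.
elim: t w => [|t IH] w.
  by move=> Z /=; case: ifP => // seedZ; split=> // _; [apply: seedP | left].
rewrite runS st_step; apply: (fold_inform_ind
  (I := fun ls => status_justified (P^~ w) (informed_by_P w) ls.1)); last exact: IH.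
move=> ls Y /flatten_mapP [u _]; case: ifP => // luw uY; apply: inform_justified.
- move=> Z' [seedZ' | [u' lu'w Pu']] cond; first exact: seedP.
  exact: ruleP lu'w Pu' cond.
- by right; exists u => //; apply/(IH u Y).1/newad_run_adopted.
Qed.

Lemma stopped_run_closed n :
  Qplus Q -> (forall u v, live u v -> u \in pi v) ->
  stopped live pi Q alpha (run n) ->
  adoption_closed (fun X v => is_adopted (st (run n) v X)).
Proof.
move=> Qp live_pi stop; split=> [X v seedX | X u v luv adXu cond].
  apply: (run_preserved (P := fun c => is_adopted (st c v X)) (t := 0%N)) => //.
    by move=> c; apply: step_adopted.
  by rewrite /= seedX.
have [t' le_t'n uX] := adopted_run_newad adXu.
have lt_t'n : (t' < n)%N.
  rewrite ltn_neqAle le_t'n andbT; apply: contraTneq uX => ->.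
  by rewrite stopped_newad_nil.
have informed : st (run n) v X <> Idle.
  apply: (run_preserved (P := fun c => st c v X <> Idle) _ lt_t'n).
    by move=> c; apply: step_nonidle.
  by rewrite runS; apply: step_informed uX; rewrite ?live_pi.
have [rejected suspended] := run_consistent n v X.
case: (st (run n) v X) informed rejected suspended => // _ rejected suspended.
- have [lt_q0 not_adY] := suspended erefl.
  case: cond => [le_q0 | [_ adY]]; first by rewrite ltNge le_q0 in lt_q0.
  by rewrite adY in not_adY.
- have lt_q1 := rejected erefl; rewrite ltNge in lt_q1.
  case: cond => [le_q0 | [le_q1 _]]; last by rewrite le_q1 in lt_q1.
  by rewrite (le_trans le_q0 (qcond_mono X Qp)) in lt_q1.
Qed.

Lemma stopped_adoptedP n v X :
  Qplus Q -> (forall u v, live u v -> u \in pi v) ->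
  stopped live pi Q alpha (run n) ->
  reflect (forall P, adoption_closed P -> P X v) (is_adopted (st (run n) v X)).
Proof.
move=> Qp live_pi stop; apply: (iffP idP) => [adX P closedP | least].
  exact: run_adopted_closed closedP adX.
exact: least (stopped_run_closed Qp live_pi stop).
Qed.
End Run.

Lemma tiebreak_ok_live (V : finType) (E live : rel V) (pi : V -> seq V) :
  (forall u v, live u v -> E u v) -> tiebreak_ok E pi ->
  forall u v, live u v -> u \in pi v.
Proof. by move=> liveE ok u v /liveE Euv; rewrite (perm_mem (ok v)) mem_enum. Qed.

Theorem lemma2 (R : realFieldType) (V : finType) (E live : rel V) (Q : gaps R)
    (SA SB : {set V}) (alpha : V -> item -> R) (tau : V -> item)
    (pi1 pi2 : V -> seq V) :
  gaps_valid Q -> Qplus Q ->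
  (forall u v, live u v -> E u v) ->
  (forall v X, 0 <= alpha v X <= 1) ->
  tiebreak_ok E pi1 -> tiebreak_ok E pi2 ->
  forall n1 n2 : nat,
    stopped live pi1 Q alpha (run live pi1 Q alpha SA SB tau n1) ->
    stopped live pi2 Q alpha (run live pi2 Q alpha SA SB tau n2) ->
    forall X : item,
      adopted_set (run live pi1 Q alpha SA SB tau n1) X =
      adopted_set (run live pi2 Q alpha SA SB tau n2) X.
Proof.
move=> _ Qp liveE _ ok1 ok2 n1 n2 stop1 stop2 X; apply/setP => v; rewrite !inE.
have live_pi1 := tiebreak_ok_live liveE ok1.
have live_pi2 := tiebreak_ok_live liveE ok2.
exact: sameP (stopped_adoptedP v X Qp live_pi1 stop1)
             (stopped_adoptedP v X Qp live_pi2 stop2).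
Qed.
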